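(* Let $(K,\delta)$ be a differential field of characteristic zero. Then $\mathrm{Stab}(\delta,K)=\mathrm{Attrac}(\delta,K)$.
   Context: A differential field $(K,\delta)$ is a field $K$ with an additive map $\delta:K\to K$ such that $\delta(fg)=f\delta(g)+g\delta(f)$. $\mathrm{Stab}(\delta,K)$ is the set of $a\in K$ for which there is a sequence $(a_i)_{i\ge0}$ in $K$ with $a_0=a$ and $\delta(a_{i+1})=a_i$ for all $i\in\mathbb{N}$ (stable elements). $\mathrm{Attrac}(\delta,K)=\bigcap_{i\in\mathbb{N}}\delta^i(K)$ is the set of $a\in K$ such that for every $i\in\mathbb{N}$ there is $a_i\in K$ with $a=\delta^i(a_i)$ (attractive elements). *)

From HB Require Import structures.
From mathcomp Require Import all_boot all_order all_algebra.
Set Implicit Arguments. Unset Strict Implicit. Unset Printing Implicit Defensive.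
Import GRing.Theory.
Local Open Scope ring_scope.

Definition is_derivation (K : fieldType) (delta : K -> K) : Prop :=
  (forall f g : K, delta (f + g) = delta f + delta g) /\
  (forall f g : K, delta (f * g) = f * delta g + g * delta f).

Definition Stab (K : fieldType) (delta : K -> K) : K -> Prop :=
  fun a => exists s : nat -> K, s 0%N = a /\ forall i : nat, delta (s i.+1) = s i.

Definition Attrac (K : fieldType) (delta : K -> K) : K -> Prop :=
  fun a => forall i : nat, exists b : K, a = iter i delta b.

(** A chain of antiderivatives of [a] gives [a] in every [delta^i(K)], so
    [Stab] is contained in [Attrac].  Conversely it suffices, by dependent
    choice, that every attractive [a] has an attractive antiderivative.  For
    any additive [delta] this holds as soon as every constant lying in the
    image of [delta] is attractive: writing [a = delta^2 b], the candidate
    [x = delta b] differs from [delta^(m+1) y] (for [a = delta^(m+2) y]) by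
    such a constant.  For a derivation in characteristic zero, a nonzero
    constant [c = delta w] yields [t = w / c] with [delta t = 1], and then
    [c = delta^m (c / m! * t^m)] for every [m]. *)

Set Warnings "-notation-overridden,-ambiguous-paths".
From mathcomp Require Import all_boot all_order all_algebra.
From Stdlib Require Import ClassicalEpsilon.
Set Implicit Arguments.
Unset Strict Implicit.
Import GRing.Theory.
Local Open Scope ring_scope.

Section IterAdditive.
Variables (V : zmodType) (f : V -> V).
Hypothesis fD : {morph f : x y / x + y}.

Lemma morph0_of_morphD : f 0 = 0.
Proof. by apply: (addrI (f 0)); rewrite -fD !addr0. Qed.

Lemma morphB_of_morphD : {morph f : x y / x - y}.
Proof.
move=> x y; apply: (addIr (f y)).
by rewrite -fD subrK addrNK.
Qed.

Lemma iter_morphD m : {morph iter m f : x y / x + y}.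
Proof. by elim: m => [|m IH] x y //=; rewrite IH fD. Qed.

Lemma iter_morph0 m : iter m f 0 = 0.
Proof. by elim: m => [|m IH] //=; rewrite IH morph0_of_morphD. Qed.

End IterAdditive.

Section StabAttrac.
Variables (K : fieldType) (delta : K -> K).

Lemma Stab_sub_Attrac a : Stab delta a -> Attrac delta a.
Proof.
move=> [s [s0 ds]] i; exists (s i).
by elim: i => [|i IH] //; rewrite iterSr ds.
Qed.

Lemma Stab_of_preimage_closed (P : K -> Prop) :
  (forall y, P y -> exists2 x, delta x = y & P x) ->
  forall a, P a -> Stab delta a.
Proof.
move=> back a Pa.
have step (y : {y | P y}) : {x : {x | P x} | delta (sval x) = sval y}.
  apply: constructive_indefinite_description.
  by have [x dx Px] := back _ (svalP y); exists (exist P x Px).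
exists (fun i => sval (iter i (fun y => sval (step y)) (exist P a Pa))).
by split=> // i; apply: (svalP (step _)).
Qed.

Hypothesis deltaD : {morph delta : x y / x + y}.

Lemma Attrac0 : Attrac delta 0.
Proof. by move=> i; exists 0; rewrite iter_morph0. Qed.

Lemma Attrac_preimage :
  (forall c w, delta w = c -> delta c = 0 -> Attrac delta c) ->
  forall a, Attrac delta a -> exists2 x, delta x = a & Attrac delta x.
Proof.
move=> const_attrac a attr_a; have [b ab] := attr_a 2%N.
exists (delta b) => [|m]; first by rewrite ab.
have [y ay] := attr_a m.+2.
set c := delta b - iter m.+1 delta y.
have dc : delta c = 0.
  by rewrite morphB_of_morphD // -[delta (delta b)]/(iter 2 delta b) -ab ay subrr.
have [z cz] := const_attrac c (b - iter m delta y) (morphB_of_morphD deltaD _ _) dc m.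
exists (z + delta y).
by rewrite iter_morphD // -cz -iterSr subrK.
Qed.

End StabAttrac.

Section Derivation.
Variables (K : fieldType) (delta : K -> K).
Hypothesis deltaD : {morph delta : x y / x + y}.
Hypothesis deltaM : forall x y, delta (x * y) = x * delta y + y * delta x.

Lemma derivation1 : delta 1 = 0.
Proof.
have double := deltaM 1 1; rewrite !mul1r in double.
by apply: (addrI (delta 1)); rewrite addr0 -double.
Qed.

Lemma derivation_natr n : delta n%:R = 0.
Proof.
elim: n => [|n IH]; first exact: morph0_of_morphD.
by rewrite -natr1 deltaD IH derivation1 addr0.
Qed.

Lemma derivation_mulC c x : delta c = 0 -> delta (c * x) = c * delta x.
Proof. by move=> dc; rewrite deltaM dc mulr0 addr0. Qed.

Lemma iter_derivation_mulC m c x :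
  delta c = 0 -> iter m delta (c * x) = c * iter m delta x.
Proof. by move=> dc; elim: m => [|m IH] //=; rewrite IH derivation_mulC. Qed.

Lemma derivation_invC c : delta c = 0 -> delta c^-1 = 0.
Proof.
move=> dc; have [->|c_nz] := eqVneq c 0; first by rewrite invr0 morph0_of_morphD.
have := derivation_mulC c^-1 dc; rewrite divff // derivation1 => /esym/eqP.
by rewrite mulf_eq0 (negbTE c_nz) => /eqP.
Qed.

Lemma derivationX x n : delta (x ^+ n.+1) = n.+1%:R * x ^+ n * delta x.
Proof.
elim: n => [|n IH]; first by rewrite expr1 expr0 mulr1 mul1r.
rewrite exprS deltaM IH [in RHS]mulrSr mulrDl mulrDl mul1r.
by congr (_ + _); rewrite exprS !mulrA (mulrC x).
Qed.

Section UnitAntiderivative.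
Variable t : K.
Hypothesis dt : delta t = 1.

Lemma iter_derivation_exp m : iter m delta (t ^+ m) = m`!%:R.
Proof.
elim: m => [|m IH] //; rewrite iterSr derivationX dt mulr1.
by rewrite iter_derivation_mulC ?derivation_natr // IH factS natrM.
Qed.

Hypothesis char0 : [pchar K] =i pred0.

Lemma Attrac_const c : delta c = 0 -> Attrac delta c.
Proof.
move=> dc m; exists (c / m`!%:R * t ^+ m).
rewrite iter_derivation_mulC ?iter_derivation_exp ?divfK //.
  by move/pcharf0P: char0 => ->; rewrite -lt0n fact_gt0.
by rewrite deltaM derivation_invC ?derivation_natr // dc !mulr0 addr0.
Qed.

End UnitAntiderivative.

Lemma Attrac_const_image c w : [pchar K] =i pred0 ->
  delta w = c -> delta c = 0 -> Attrac delta c.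
Proof.
move=> char0 dw dc; have [->|c_nz] := eqVneq c 0; first exact: Attrac0.
apply: (@Attrac_const (w / c)) => //.
by rewrite deltaM derivation_invC // mulr0 add0r dw mulVf.
Qed.

End Derivation.

Theorem proposition2p4 (K : fieldType) (delta : K -> K) :
  is_derivation delta ->
  [pchar K] =i pred0 ->
  forall a : K, Stab delta a <-> Attrac delta a.
Proof.
move=> [deltaD deltaM] char0 a; split; first exact: Stab_sub_Attrac.
apply: Stab_of_preimage_closed; apply: Attrac_preimage => // c w.
exact: Attrac_const_image.
Qed.
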